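(* Let $H$ be a real Hilbert space with inner product $(\cdot,\cdot)_H$ and norm $\|\cdot\|$. Let $\mathcal{L}$ be a symmetric positive definite linear operator on $H$ and $f:H\to\mathbb{R}$ Fréchet differentiable with $\nabla f$ Lipschitz continuous with constant $L$. For each $\Phi\in H$ let $\mathbf{L}(\Phi)=\mathbf{M}(\Phi)+\mathbf{S}(\Phi)$ with $\mathbf{S}(\Phi)$ skew-symmetric and $-\mathbf{M}(\Phi)$ symmetric positive definite, and assume there are constants $\alpha_{\mathbf{M}},\beta_{\mathbf{S}}>0$ such that for all $\Phi,\Psi_1,\Psi_2,\Psi\in H$: $(\mathbf{S}(\Phi)\Psi_1,\Psi_2)_H\le\beta_{\mathbf{S}}\|\Psi_1\|\|\Psi_2\|$ and $(-\mathbf{M}(\Phi)\Psi,\Psi)_H\ge\alpha_{\mathbf{M}}\|\Psi\|^2$. Let $\tau>0$, $A>0$, let $\Phi^{n-1},\Phi^n,\hat\Phi^{n+1}\in H$ be given, and suppose $\Phi^{n+1}$ satisfies the SGE-SBDF2 scheme $$\frac{3\Phi^{n+1}-4\Phi^n+\Phi^{n-1}}{2\tau}=\mathbf{L}(\hat\Phi^{n+1})\mu^{n+1},\quad \mu^{n+1}=\mathcal{L}\Phi^{n+1}-\tau A\,\mathbf{M}(\hat\Phi^{n+1})(3\Phi^{n+1}-4\Phi^n+\Phi^{n-1})+2\nabla f(\Phi^n)-\nabla f(\Phi^{n-1}).$$ Let $c=\big(1+\frac{\beta_{\mathbf{S}}}{\alpha_{\mathbf{M}}}\big)^{-1}$ and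 define $$\tilde E_{BDF2}(\Phi^{k+1},\Phi^k)=\tfrac14\|\mathcal{L}^{1/2}\Phi^{k+1}\|^2+\tfrac14\|\mathcal{L}^{1/2}(2\Phi^{k+1}-\Phi^k)\|^2+\tfrac32f(\Phi^{k+1})-\tfrac12f(\Phi^k)+\big(\tfrac{3L}{2}+\sqrt{2A}\,c\big)\|\Phi^{k+1}-\Phi^k\|^2.$$ Then, provided $A\ge\frac{9L^2}{8}\big(1+\frac{\beta_{\mathbf{S}}}{\alpha_{\mathbf{M}}}\big)^2$ (so that all coefficients on the right below are nonpositive), $$\tilde E_{BDF2}(\Phi^{n+1},\Phi^n)-\tilde E_{BDF2}(\Phi^n,\Phi^{n-1})\le-\big(2\sqrt{2A}\,c-3L\big)\|\Phi^{n+1}-\Phi^n\|^2-\tfrac32\sqrt{2A}\,c\,\|d_{tt}\Phi^n\|^2-\tfrac14\|\mathcal{L}^{1/2}d_{tt}\Phi^n\|^2,$$ where $d_{tt}\Phi^n=\Phi^{n+1}-2\Phi^n+\Phi^{n-1}$.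
   Context: $\|\mathcal{L}^{1/2}\Phi\|^2=(\Phi,\mathcal{L}\Phi)_H$. Skew-symmetric: $(\mathbf{S}\Phi,\Psi)_H=-(\Phi,\mathbf{S}\Psi)_H$. *)

From HB Require Import structures.
From mathcomp Require Import all_boot all_order all_algebra.
From mathcomp Require Import reals.
Set Implicit Arguments. Unset Strict Implicit. Unset Printing Implicit Defensive.
Import Order.TTheory GRing.Theory Num.Theory.
Local Open Scope ring_scope.

Section Hilbert.
Variables (R : realType) (V : lmodType R).

Definition is_inner_product (ip : V -> V -> R) : Prop :=
  [/\ (forall x y, ip x y = ip y x),
      (forall a x y z, ip (a *: x + y) z = a * ip x z + ip y z),
      (forall x, 0 <= ip x x) &
      (forall x, ip x x = 0 -> x = 0)].

Definition ipnorm (ip : V -> V -> R) (x : V) : R := Num.sqrt (ip x x).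

Definition ip_complete (ip : V -> V -> R) : Prop :=
  forall u : nat -> V,
    (forall e : R, 0 < e -> exists N : nat, forall m n : nat,
        (N <= m)%N -> (N <= n)%N -> ipnorm ip (u m - u n) < e) ->
    exists l : V, forall e : R, 0 < e -> exists N : nat, forall n : nat,
        (N <= n)%N -> ipnorm ip (u n - l) < e.

Definition is_hilbert (ip : V -> V -> R) : Prop :=
  is_inner_product ip /\ ip_complete ip.

Definition op_symmetric (ip : V -> V -> R) (T : V -> V) : Prop :=
  forall x y, ip (T x) y = ip x (T y).

Definition op_skew (ip : V -> V -> R) (T : V -> V) : Prop :=
  forall x y, ip (T x) y = - ip x (T y).

Definition op_posdef (ip : V -> V -> R) (T : V -> V) : Prop :=
  forall x, x != 0 -> 0 < ip x (T x).

Definition is_gradient (ip : V -> V -> R) (f : V -> R) (g : V -> V) : Prop :=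
  forall x : V, forall e : R, 0 < e -> exists d : R, 0 < d /\
    forall y : V, ipnorm ip (y - x) < d ->
      `|f y - f x - ip (g x) (y - x)| <= e * ipnorm ip (y - x).

Definition lipschitz_with (ip : V -> V -> R) (g : V -> V) (L : R) : Prop :=
  forall x y, ipnorm ip (g x - g y) <= L * ipnorm ip (x - y).

(* ||L^{1/2} x||^2 := (x, L x) *)
Definition half_sq (ip : V -> V -> R) (Lop : V -> V) (x : V) : R := ip x (Lop x).

Definition E_BDF2 (ip : V -> V -> R) (Lop : V -> V) (f : V -> R)
    (L A c : R) (P1 P0 : V) : R :=
  4^-1 * half_sq ip Lop P1 + 4^-1 * half_sq ip Lop (2 *: P1 - P0)
  + 3 / 2 * f P1 - 2^-1 * f P0
  + (3 * L / 2 + Num.sqrt (2 * A) * c) * ipnorm ip (P1 - P0) ^+ 2.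

End Hilbert.

From mathcomp Require Import all_boot all_order all_algebra.
From mathcomp Require Import classical_sets reals.
From mathcomp Require Import ring lra.
Set Implicit Arguments. Unset Strict Implicit. Unset Printing Implicit Defensive.
Import Order.TTheory GRing.Theory Num.Theory.
Local Open Scope ring_scope.

(* Since S is skew, testing the scheme with mu gives
   (delta, mu) = - 2 tau (- M mu, mu), where delta = 3 P1 - 4 P0 + Pm; expanding
   mu, (delta, Lop P1) + (delta, 2 grad f(P0) - grad f(Pm)) equals
   - tau (2 (- M mu, mu) + A (- M delta, delta)), and since delta = 2 tau (M + S) mu
   the bounds on M and S make this at most - sqrt(2A) c |delta|^2.  The
   Lop-part telescopes by the BDF2 identity, with |x|_L^2 = (x, Lop x),
   2 (3a - 4b + c, Lop a)
     = |a|_L^2 + |2a - b|_L^2 - |b|_L^2 - |2b - c|_L^2 + |a - 2b + c|_L^2,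
   the f-part is controlled by the descent lemma
   f y <= f x + (grad f(x), y - x) + L/2 |y - x|^2, and
   |delta|^2 = 6 |P1 - P0|^2 - 2 |P0 - Pm|^2 + 3 |dtt|^2 distributes the
   numerical dissipation over the modified energy. *)

(* Real induction: the supremum of the initial segments of [a, b] on which
   phi stays below phi a can be neither short of b nor excluded. *)
Lemma locally_nonincreasing_le (R : realType) (phi : R -> R) (a b : R) :
  a <= b ->
  (forall t, a <= t <= b -> exists2 d, 0 < d &
     forall s, `|s| < d -> s * (phi (t + s) - phi t) <= 0) ->
  phi b <= phi a.
Proof.
move=> ab loc.
pose P : set R := fun t => t <= b /\ forall s, a <= s <= t -> phi s <= phi a.
have Pa : P a by split=> // s /andP[a_s s_a]; have -> : s = a by lra.
have P_ub : ubound P b by move=> t [].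
have supP : has_sup P by split; [exists a | exists b].
set m := sup P.
have am : a <= m := sup_upper_bound supP Pa.
have mb : m <= b := ge_sup (ex_intro _ a Pa) P_ub.
have below s : a <= s < m -> phi s <= phi a.
  move=> /andP[a_s sm]; have sm0 : 0 < m - s by rewrite subr_gt0.
  have [t [_ Pt] mt] := sup_adherent sm0 supP.
  by apply: Pt; rewrite -/m in mt; rewrite a_s /=; lra.
have [d d0 loc_m] := loc m ltac:(lra).
have upto_m s : a <= s <= m -> phi s <= phi a.
  move=> /andP[a_s sm]; have [sm'|ms] := ltP s m; first by apply: below; rewrite a_s.
  have -> : s = m by lra.
  have [ma|am'] := eqVneq m a; first by rewrite ma.
  pose r := Num.min (d / 2) (m - a).
  have r0 : 0 < r by rewrite lt_min divr_gt0 //= subr_gt0 lt_neqAle eq_sym am' am.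
  have rd : r <= d / 2 by rewrite ge_min lexx.
  have rm : r <= m - a by rewrite ge_min lexx orbT.
  have := loc_m (- r); rewrite normrN gtr0_norm // => /(_ ltac:(lra)).
  have : phi (m + - r) <= phi a by apply: below; lra.
  nra.
have m_eq_b : m = b.
  apply/eqP; rewrite eq_le mb leNgt; apply/negP => mb'.
  pose r := Num.min (d / 2) (b - m).
  have r0 : 0 < r by rewrite lt_min divr_gt0 //= subr_gt0.
  have rd : r <= d / 2 by rewrite ge_min lexx.
  have rb : r <= b - m by rewrite ge_min lexx orbT.
  suff /(sup_upper_bound supP) : P (m + r) by rewrite -/m; lra.
  split; first lra.
  move=> s /andP[a_s sr]; have [sm|ms] := leP s m; first by apply: upto_m; rewrite a_s.
  have := loc_m (s - m); rewrite gtr0_norm ?subr_gt0 // subrKC => /(_ ltac:(lra)).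
  have : phi m <= phi a by apply: upto_m; rewrite am lexx.
  nra.
by apply: upto_m; rewrite ab -m_eq_b lexx.
Qed.

Section SymmetricForm.
Variables (R : realType) (V : lmodType R) (B : V -> V -> R).
Hypothesis Bsym : forall x y, B x y = B y x.
Hypothesis Blin : forall a x y z, B (a *: x + y) z = a * B x z + B y z.

Lemma formDl x y z : B (x + y) z = B x z + B y z.
Proof. by have := Blin 1 x y z; rewrite scale1r mul1r. Qed.

Lemma form0l z : B 0 z = 0.
Proof. have := formDl 0 0 z; rewrite addr0; lra. Qed.

Lemma formZl a x z : B (a *: x) z = a * B x z.
Proof. by rewrite -[a *: x]addr0 Blin form0l addr0. Qed.

Lemma formNl x z : B (- x) z = - B x z.
Proof. by rewrite -scaleN1r formZl mulN1r. Qed.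

Lemma formDr x y z : B z (x + y) = B z x + B z y.
Proof. by rewrite Bsym formDl !(Bsym z). Qed.

Lemma formZr a x z : B z (a *: x) = a * B z x.
Proof. by rewrite Bsym formZl Bsym. Qed.

Lemma formNr x z : B z (- x) = - B z x.
Proof. by rewrite Bsym formNl Bsym. Qed.

Lemma form0r z : B z 0 = 0.
Proof. by rewrite Bsym form0l. Qed.

Definition formE := (form0l, formDl, formNl, formZl, form0r, formDr, formNr, formZr).

Lemma form_amgm (Bpos : forall x, 0 <= B x x) p x y :
  2 * p * B x y <= p ^+ 2 * B x x + B y y.
Proof.
have := Bpos (p *: x - y); rewrite !formE (Bsym y x); lra.
Qed.

Lemma form_bdf2 a b c :
  2 * B (3 *: a - 4 *: b + c) a
  = B a a + B (2 *: a - b) (2 *: a - b) - B b b - B (2 *: b - c) (2 *: b - c)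
    + B (a - 2 *: b + c) (a - 2 *: b + c).
Proof. rewrite !formE (Bsym b a) (Bsym c a) (Bsym c b); ring. Qed.

Lemma form_bdf2_increment a b c :
  B (3 *: a - 4 *: b + c) (3 *: a - 4 *: b + c)
  = 6 * B (a - b) (a - b) - 2 * B (b - c) (b - c)
    + 3 * B (a - 2 *: b + c) (a - 2 *: b + c).
Proof. rewrite !formE (Bsym b a) (Bsym c a) (Bsym c b); ring. Qed.

End SymmetricForm.

Section InnerProduct.
Variables (R : realType) (V : lmodType R) (ip : V -> V -> R).
Hypothesis hip : is_inner_product ip.

Lemma ip_sym x y : ip x y = ip y x.
Proof. by case: hip. Qed.

Lemma ip_linl a x y z : ip (a *: x + y) z = a * ip x z + ip y z.
Proof. by case: hip. Qed.

Lemma ip_ge0 x : 0 <= ip x x.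
Proof. by case: hip. Qed.

Definition ipE := (form0l ip_linl, formDl ip_linl, formNl ip_linl, formZl ip_linl,
  form0r ip_sym ip_linl, formDr ip_sym ip_linl, formNr ip_sym ip_linl,
  formZr ip_sym ip_linl).

Lemma ipnorm_ge0 x : 0 <= ipnorm ip x.
Proof. exact: sqrtr_ge0. Qed.

Lemma ipnorm_sqr x : ipnorm ip x ^+ 2 = ip x x.
Proof. by rewrite sqr_sqrtr ?ip_ge0. Qed.

Lemma ipnorm_eq0 x : (ipnorm ip x == 0) = (x == 0).
Proof.
rewrite sqrtr_eq0 le_eqVlt ltNge ip_ge0 orbF.
apply/eqP/eqP => [|->]; last by rewrite ipE.
by case: hip => _ _ _; apply.
Qed.

Lemma ipnormZ a x : ipnorm ip (a *: x) = `|a| * ipnorm ip x.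
Proof. by rewrite /ipnorm !ipE mulrA -expr2 sqrtrM ?sqr_ge0 // sqrtr_sqr. Qed.

Lemma ipnormN x : ipnorm ip (- x) = ipnorm ip x.
Proof. by rewrite -scaleN1r ipnormZ normrN1 mul1r. Qed.

Lemma cauchy_schwarz x y : ip x y <= ipnorm ip x * ipnorm ip y.
Proof.
have [->|x0] := eqVneq x 0; first by rewrite ipE mulr_ge0 ?ipnorm_ge0.
have [->|y0] := eqVneq y 0; first by rewrite ipE mulr_ge0 ?ipnorm_ge0.
have nx : 0 < ipnorm ip x by rewrite lt_def ipnorm_eq0 x0 ipnorm_ge0.
have ny : 0 < ipnorm ip y by rewrite lt_def ipnorm_eq0 y0 ipnorm_ge0.
have := form_amgm ip_sym ip_linl ip_ge0 1 (ipnorm ip y *: x) (ipnorm ip x *: y).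
rewrite !ipE -!ipnorm_sqr => amgm.
by rewrite -(ler_pM2l (mulr_gt0 nx ny)); nra.
Qed.

Lemma skew_ip_diag (T : V -> V) : op_skew ip T -> forall x, ip (T x) x = 0.
Proof. by move=> skew x; have := skew x x; rewrite [ip x _]ip_sym; lra. Qed.

End InnerProduct.

Section Descent.
Variables (R : realType) (V : lmodType R) (ip : V -> V -> R).
Variables (f : V -> R) (g : V -> V) (L : R).
Hypotheses (hip : is_inner_product ip) (hgrad : is_gradient ip f g).
Hypotheses (L_ge0 : 0 <= L) (hlip : lipschitz_with ip g L).

Lemma gradient_directional_bound z h eps : 0 < eps -> exists2 d, 0 < d &
  forall s, `|s| < d -> s * (f (z + s *: h) - f z - s * ip (g z) h) <= eps * s ^+ 2.
Proof.
move=> eps0; set n := ipnorm ip h.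
have n1 : 0 < n + 1 by rewrite ltr_wpDl ?ipnorm_ge0.
have [d [d0 near_z]] := hgrad z (divr_gt0 eps0 n1).
exists (d / (n + 1)); first by rewrite divr_gt0.
move=> s; rewrite ltr_pdivlMr // => sd.
have := near_z (z + s *: h); rewrite addrC addKr ipnormZ // (ipE hip) -/n.
have sn : `|s| * n <= `|s| * (n + 1) by rewrite ler_wpM2l ?lerDl.
move=> /(_ (le_lt_trans sn sd)) bound.
apply: le_trans (ler_norm _) _; rewrite normrM.
apply: le_trans (ler_wpM2l (normr_ge0 s) bound) _.
have -> : `|s| * (eps / (n + 1) * (`|s| * n)) = eps * s ^+ 2 * (n / (n + 1)).
  by rewrite -(real_normK (num_real s)); ring.
rewrite ler_piMr //; first by rewrite mulr_ge0 ?sqr_ge0 ?ltW.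
by rewrite ler_pdivrMr // mul1r lerDl.
Qed.

Lemma gradient_increment_le x h t : 0 <= t ->
  ip (g (x + t *: h)) h - ip (g x) h <= L * t * ipnorm ip h ^+ 2.
Proof.
move=> t0; rewrite -(formNl (ip_linl hip)) -(formDl (ip_linl hip)).
apply: le_trans (cauchy_schwarz hip _ _) _.
apply: le_trans (ler_wpM2r (ipnorm_ge0 _ _) (hlip _ _)) _.
by rewrite addrC addKr (ipnormZ hip) ger0_norm // expr2 !mulrA.
Qed.

Lemma descent_lemma x y :
  f y - f x - ip (g x) (y - x) <= L / 2 * ipnorm ip (y - x) ^+ 2.
Proof.
set h := y - x; set n2 := ipnorm ip h ^+ 2.
have n2_ge0 : 0 <= n2 by rewrite sqr_ge0.
apply/ler_addgt0Pr => eps eps0.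
(* By the first-order expansion of f and the Lipschitz bound on g, phi is
   locally nonincreasing; the slack eps * t absorbs the o(s) remainder. *)
pose phi t := f (x + t *: h) - t * ip (g x) h - L / 2 * t ^+ 2 * n2 - eps * t.
suff : phi 1 <= phi 0.
  by rewrite /phi scale1r scale0r addr0 /h subrKC; lra.
apply: locally_nonincreasing_le => // t /andP[t0 _].
have [d d0 near_t] :=
  gradient_directional_bound (x + t *: h) h (divr_gt0 eps0 (ltr0Sn R 1)).
have Ln1 : 0 < L * n2 + 1 by rewrite ltr_wpDl // mulr_ge0.
exists (Num.min d (eps / (L * n2 + 1))); first by rewrite lt_min d0 divr_gt0.
move=> s; rewrite lt_min ltr_pdivlMr // => /andP[sd sL].
have Ln2 : 0 <= L * n2 by rewrite mulr_ge0.
have slope : 0 <= eps + s * (L * n2).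
  have := ler_wpM2r Ln2 (ler_norm (- s)); rewrite normrN.
  have := normr_ge0 s; nra.
have := ler_wpM2l (sqr_ge0 s) (gradient_increment_le x h t0).
have := mulr_ge0 (sqr_ge0 s) slope.
have := near_t s sd.
rewrite /phi scalerDl addrA; rewrite -/n2; nra.
Qed.

Lemma bdf2_extrapolation_le P1 P0 Pm :
  3 / 2 * f P1 - 2 * f P0 + 2^-1 * f Pm
    - 2^-1 * ip (3 *: P1 - 4 *: P0 + Pm) (2 *: g P0 - g Pm)
  <= 3 * L / 2 * (ipnorm ip (P1 - P0) ^+ 2 + ipnorm ip (P0 - Pm) ^+ 2).
Proof.
set u := P1 - P0; set v := P0 - Pm.
have D1 := descent_lemma P0 P1.
have D2 := descent_lemma P0 Pm.
rewrite -[Pm - P0]opprB (ipnormN hip) -/v in D2.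
have lip_v := hlip P0 Pm; rewrite -/v in lip_v.
have C1 : - ip u (g P0 - g Pm) <= ipnorm ip u * (L * ipnorm ip v).
  rewrite -(formNl (ip_linl hip)); apply: le_trans (cauchy_schwarz hip _ _) _.
  by rewrite (ipnormN hip) ler_wpM2l ?ipnorm_ge0 ?lip_v.
have C2 : ip v (g P0 - g Pm) <= ipnorm ip v * (L * ipnorm ip v).
  by apply: le_trans (cauchy_schwarz hip _ _) _; rewrite ler_wpM2l ?ipnorm_ge0 ?lip_v.
have AM : L * (2 * (ipnorm ip u * ipnorm ip v))
          <= L * (ipnorm ip u ^+ 2 + ipnorm ip v ^+ 2).
  by rewrite ler_wpM2l //; have := sqr_ge0 (ipnorm ip u - ipnorm ip v); lra.
rewrite !(ip_sym hip (g P0)) in D1 D2.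
move: D1 D2 C1 C2 AM; rewrite /u /v !(ipE hip); lra.
Qed.

End Descent.

Section Scheme.
Variables (R : realType) (V : lmodType R) (ip : V -> V -> R).
Variables (M S : {linear V -> V}) (alpha beta : R).
Hypotheses (hip : is_inner_product ip) (S_skew : op_skew ip S).
Hypothesis M_sym : op_symmetric ip (fun x => - M x).
Hypotheses (alpha_gt0 : 0 < alpha) (beta_ge0 : 0 <= beta).
Hypothesis S_bound : forall x y, ip (S x) y <= beta * ipnorm ip x * ipnorm ip y.
Hypothesis M_coercive : forall x, alpha * ipnorm ip x ^+ 2 <= ip (- M x) x.

Let D x y := ip (- M x) y.

Let D_sym x y : D x y = D y x.
Proof. by rewrite /D M_sym ip_sym. Qed.

Let D_linl a x y z : D (a *: x + y) z = a * D x z + D y z.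
Proof. by rewrite /D linearP opprD -scalerN ip_linl. Qed.

Let D_ge0 x : 0 <= D x x.
Proof. exact: le_trans (mulr_ge0 (ltW alpha_gt0) (sqr_ge0 _)) (M_coercive x). Qed.

Lemma mobility_range_norm_le tau lam mu delta : 0 <= tau -> 0 < lam ->
  delta = (2 * tau) *: (M mu + S mu) ->
  lam * ip delta delta
  <= tau * (1 + beta / alpha) * (lam ^+ 2 * D mu mu + D delta delta).
Proof.
move=> tau0 lam0 hdelta.
set W := lam ^+ 2 * D mu mu + D delta delta.
have split_dd : ip delta delta = 2 * tau * (ip (M mu) delta + ip (S mu) delta).
  by rewrite {1}hdelta !(ipE hip).
have amgm_M : 2 * lam * ip (M mu) delta <= W.
  have := form_amgm D_sym D_linl D_ge0 lam mu (- delta).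
  by rewrite !(formNr D_sym D_linl, formNl D_linl) opprK /D (ipE hip) opprK.
have amgm_S : 2 * lam * ip (S mu) delta <= beta / alpha * W.
  set nm := ipnorm ip mu; set nd := ipnorm ip delta.
  have S1 : 2 * lam * ip (S mu) delta <= 2 * lam * (beta * nm * nd).
    by apply: ler_wpM2l; [rewrite mulr_ge0 // ltW | exact: S_bound].
  have S2 : 0 <= beta * (lam * nm - nd) ^+ 2 by rewrite mulr_ge0 ?sqr_ge0.
  have S3 : alpha * (lam ^+ 2 * nm ^+ 2 + nd ^+ 2) <= W.
    have := ler_wpM2l (sqr_ge0 lam) (M_coercive mu).
    have := M_coercive delta; rewrite /W /D -/nm -/nd; lra.
  have S4 := ler_wpM2l (divr_ge0 beta_ge0 (ltW alpha_gt0)) S3.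
  rewrite mulrA divfK ?gt_eqF // in S4.
  lra.
rewrite split_dd.
have -> : lam * (2 * tau * (ip (M mu) delta + ip (S mu) delta))
  = tau * (2 * lam * ip (M mu) delta + 2 * lam * ip (S mu) delta) by ring.
have := ler_wpM2l tau0 (lerD amgm_M amgm_S); lra.
Qed.

Lemma stabilized_step_dissipation tau A delta w : 0 < tau -> 0 < A ->
  let mu := w - (tau * A) *: M delta in
  (2 * tau)^-1 *: delta = M mu + S mu ->
  ip delta w <= - (Num.sqrt (2 * A) * (1 + beta / alpha)^-1) * ip delta delta.
Proof.
move=> tau0 A0 mu hscheme.
have mu_def : mu = w - (tau * A) *: M delta by [].
clearbody mu.
have tau2 : 2 * tau != 0 by rewrite mulf_neq0 ?gt_eqF.
have hdelta : delta = (2 * tau) *: (M mu + S mu).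
  by rewrite -hscheme scalerA mulfV // scale1r.
have energy : ip delta mu = - (2 * tau) * D mu mu.
  by rewrite {1}hdelta !(ipE hip) (skew_ip_diag hip S_skew) /D (ipE hip); ring.
have expand : ip delta mu = ip delta w + tau * A * D delta delta.
  by rewrite {1}mu_def /D !(ipE hip) (ip_sym hip (M delta)); ring.
(* lam = r / A makes A * lam ^+ 2 = 2, matching the two dissipation terms. *)
set r := Num.sqrt (2 * A); set K := 1 + beta / alpha.
have r2 : r ^+ 2 = 2 * A by rewrite sqr_sqrtr // mulr_ge0 // ltW.
have K0 : 0 < K by rewrite ltr_pwDl // divr_ge0 // ltW.
have lam0 : 0 < r / A by rewrite divr_gt0 // sqrtr_gt0 mulr_gt0.
have cK : 0 <= K^-1 by rewrite invr_ge0 ltW.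
have := ler_wpM2l (mulr_ge0 (ltW A0) cK)
  (mobility_range_norm_le (ltW tau0) lam0 hdelta).
have -> : A * K^-1 * (r / A * ip delta delta) = r * K^-1 * ip delta delta.
  by field; rewrite !gt_eqF.
have -> : A * K^-1 * (tau * K * ((r / A) ^+ 2 * D mu mu + D delta delta))
          = tau * (2 * D mu mu + A * D delta delta).
  by rewrite expr_div_n r2; field; rewrite !gt_eqF.
lra.
Qed.

End Scheme.

Theorem theorem3p9 (R : realType) (V : lmodType R) (ip : V -> V -> R)
  (Lop : {linear V -> V}) (f : V -> R) (gradf : V -> V) (L : R)
  (Mop Sop : V -> {linear V -> V}) (alphaM betaS tau A : R)
  (Pm P0 Phat P1 : V) :
  is_hilbert ip ->
  op_symmetric ip Lop -> op_posdef ip Lop ->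
  is_gradient ip f gradf -> 0 <= L -> lipschitz_with ip gradf L ->
  (forall Phi, op_skew ip (Sop Phi)) ->
  (forall Phi, op_symmetric ip (fun x => - Mop Phi x)) ->
  (forall Phi, op_posdef ip (fun x => - Mop Phi x)) ->
  0 < alphaM -> 0 < betaS ->
  (forall Phi Psi1 Psi2, ip (Sop Phi Psi1) Psi2
                         <= betaS * ipnorm ip Psi1 * ipnorm ip Psi2) ->
  (forall Phi Psi, ip (- Mop Phi Psi) Psi >= alphaM * ipnorm ip Psi ^+ 2) ->
  0 < tau -> 0 < A ->
  (let mu := Lop P1 - (tau * A) *: Mop Phat (3 *: P1 - 4 *: P0 + Pm)
             + 2 *: gradf P0 - gradf Pm in
   (2 * tau)^-1 *: (3 *: P1 - 4 *: P0 + Pm) = Mop Phat mu + Sop Phat mu) ->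
  A >= 9 * L ^+ 2 / 8 * (1 + betaS / alphaM) ^+ 2 ->
  let c := (1 + betaS / alphaM)^-1 in
  let dtt := P1 - 2 *: P0 + Pm in
  E_BDF2 ip Lop f L A c P1 P0 - E_BDF2 ip Lop f L A c P0 Pm
  <= - (2 * Num.sqrt (2 * A) * c - 3 * L) * ipnorm ip (P1 - P0) ^+ 2
     - 3 / 2 * Num.sqrt (2 * A) * c * ipnorm ip dtt ^+ 2
     - 4^-1 * half_sq ip Lop dtt.
Proof.
(* The bound on A only fixes the signs of the right-hand side. *)
move=> [hip _] Lsym _ hgrad L_ge0 hlip Sskew Msym _ alpha_gt0 beta_gt0 S_bound
  M_coercive tau_gt0 A_gt0 hscheme _; cbv zeta.
set c := (1 + betaS / alphaM)^-1; set dtt := P1 - 2 *: P0 + Pm.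
set delta := 3 *: P1 - 4 *: P0 + Pm; set G := 2 *: gradf P0 - gradf Pm.
have diss : ip delta (Lop P1 + G) <= - (Num.sqrt (2 * A) * c) * ip delta delta.
  apply: (stabilized_step_dissipation hip (Sskew Phat) (Msym Phat) alpha_gt0
    (ltW beta_gt0) (S_bound Phat) (M_coercive Phat) tau_gt0 A_gt0).
  by rewrite /G addrAC !addrA.
have Lform_sym x y : ip x (Lop y) = ip y (Lop x) by rewrite (ip_sym hip) Lsym.
have energy_L :=
  form_bdf2 Lform_sym (fun a x y z => ip_linl hip a x y (Lop z)) P1 P0 Pm.
have norm_delta := form_bdf2_increment (ip_sym hip) (ip_linl hip) P1 P0 Pm.
have f_bound := bdf2_extrapolation_le hip hgrad L_ge0 hlip P1 P0 Pm.
rewrite -/delta -/dtt -/G -!(ipnorm_sqr hip) in energy_L f_bound norm_delta.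
have := congr1 (fun t => Num.sqrt (2 * A) * c * t) norm_delta.
move: diss; rewrite (formDr (ip_sym hip) (ip_linl hip)) -(ipnorm_sqr hip).
rewrite /E_BDF2 /half_sq; lra.
Qed.
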